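(* Let $E:\mathbb{R}^M\to\mathbb{R}$ be the discretized Lifshitz–Petrich energy described in the context. Let $\bar U\in\mathbb{R}^M$ and $U\in\mathbb{R}^M$ be states lying in the generalized quadratic region of a generalized local minimum of $E$ (so $H(U)$ and $H(\bar U)$ have no negative eigenvalues), and suppose $\dim\mathcal{W}^k(U)\le\dim\mathcal{W}^k(\bar U)$ and $\|\sin\Theta(\mathcal{W}^k(U),\mathcal{W}^k(\bar U))\|_2<1$. Then every solution $\bm v$ of the optimization problem $$\min_{\bm v\in\mathbb{R}^M}\langle\bm v,H(U)\bm v\rangle\quad\text{s.t.}\quad\langle\bm v,\bm v\rangle=1,\ \ \bm v\perp\mathcal{W}^k(\bar U)$$ has an ascent component, i.e. its orthogonal projection onto $\mathcal{W}^s(U)$ is nonzero.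
   Context: Setting: fix an invertible lattice matrix $\bm A\in\mathbb{R}^{n\times n}$ and $\bm B$ with $\bm A\bm B^T=2\pi I$; grid $\Omega_N=\{\bm A(j_1/N,\dots,j_n/N)^T:0\le j_i\le N-1\}$ with $M=N^n$ points; $U\in\mathbb{R}^M$ is a grid function; $\langle f,g\rangle=\frac1M\sum_s f(\bm r_s)\overline{g(\bm r_s)}$. $\mathcal{F}_M$ is the discrete Fourier transform over $\mathbb{K}_N^n=\{\bm k\in\mathbb{Z}^n:-N/2\le k_j<N/2\}$, $D$ is diagonal with entries $[q_1^2-|\bm B\bm k|^2]^2[q_2^2-|\bm B\bm k|^2]^2$, $\varepsilon,\alpha\in\mathbb{R}$. Energy $E(U)=\tfrac12\langle U,\mathcal{F}_M^{-1}D\mathcal{F}_MU\rangle+\frac1M\sum_s(-\tfrac\varepsilon2u_s^2-\tfrac\alpha3u_s^3+\tfrac14u_s^4)$, gradient $\nabla E(U)=\mathcal{F}_M^{-1}D\mathcal{F}_MU+\operatorname{diag}(-\varepsilon-\alpha U+U^2)U$, Hessian $H(U)=\mathcal{F}_M^{-1}D\mathcal{F}_M+\operatorname{diag}(-\varepsilon-2\alpha U+3U^2)$ (a real symmetric matrix). A generalized local minimum (GLM) is a critical point ($\nabla E=0$) whose Hessian has no negative eigenvalues. The generalized quadratic region (GQR) of a generalized critical point $U^*$ is a region around $U^*$ on which $H(U)$ has the same number of negative eigenvalues as $H(U^* )$. $\mathcal{W}^k(U)$, $\mathcal{W}^s(U)$ are the spans of eigenvectors of $H(U)$ with zero, resp.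 positive, eigenvalues. Principal angles: for subspaces $\mathcal{W},\widehat{\mathcal{W}}\subset\mathbb{R}^M$ with $\dim\mathcal{W}=d\le\dim\widehat{\mathcal{W}}$, the angles $0\le\theta_1\le\dots\le\theta_d\le\pi/2$ are defined recursively by $\cos\theta_i=\max\{\bm u^T\bm v/(\|\bm u\|_2\|\bm v\|_2):\bm u\in\mathcal{W},\bm u\perp\bm u_1,\dots,\bm u_{i-1},\ \bm v\in\widehat{\mathcal{W}},\bm v\perp\bm v_1,\dots,\bm v_{i-1}\}$, attained at $(\bm u_i,\bm v_i)$; $\sin\Theta(\mathcal{W},\widehat{\mathcal{W}})=\operatorname{diag}(\sin\theta_1,\dots,\sin\theta_d)$, so $\|\sin\Theta(\mathcal{W},\widehat{\mathcal{W}})\|_2=\sin\theta_d$. *)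

From HB Require Import structures.
From mathcomp Require Import all_boot all_order all_algebra.
From mathcomp Require Import all_classical all_reals all_analysis.
Set Implicit Arguments. Unset Strict Implicit. Unset Printing Implicit Defensive.
Import Order.TTheory GRing.Theory Num.Theory.
Local Open Scope ring_scope.

Section LP.
Variables (R : realType) (n N : nat).

(* M = N^n grid points; the grid index s < N^n encodes the multi-index
   j(s) = (j_0,...,j_{n-1}) by its base-N digits. *)
Definition Mdim : nat := (N ^ n)%N.

Definition jidx (s : nat) (i : 'I_n) : nat := (s %/ N ^ i) %% N.

Definition gridpt (A : 'M[R]_n) (s : nat) : 'cV[R]_n :=
  A *m \col_i ((jidx s i)%:R / N%:R).

(* frequency set K_N^n = {k in Z^n : -N/2 <= k_j < N/2}, parametrized by
   m : {ffun 'I_n -> 'I_N} via k_j = m_j - floor(N/2). *)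
Definition kvec (m : {ffun 'I_n -> 'I_N}) : 'cV[R]_n :=
  \col_i ((m i)%:R - (N./2)%:R).

Definition dotc (x y : 'cV[R]_n) : R := \sum_i x i 0 * y i 0.

Definition Dsym (q1 q2 : R) (B : 'M[R]_n) (m : {ffun 'I_n -> 'I_N}) : R :=
  let b := dotc (B *m kvec m) (B *m kvec m) in
  (q1 ^+ 2 - b) ^+ 2 * (q2 ^+ 2 - b) ^+ 2.

(* The matrix F_M^{-1} D F_M: its (s,t) entry is
   (1/M) sum_{k in K} D_k exp(i Bk.(r_s - r_t)); we take its real part. *)
Definition Lmx (A B : 'M[R]_n) (q1 q2 : R) : 'M[R]_Mdim :=
  \matrix_(s, t) ((Mdim%:R)^-1 *
     \sum_(m : {ffun 'I_n -> 'I_N})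
        Dsym q1 q2 B m * cos (dotc (B *m kvec m) (gridpt A s - gridpt A t))).

Definition gradE (A B : 'M[R]_n) (q1 q2 eps alpha : R) (U : 'rV[R]_Mdim)
  : 'rV[R]_Mdim :=
  U *m Lmx A B q1 q2 +
  \row_s ((- eps - alpha * U 0 s + U 0 s ^+ 2) * U 0 s).

Definition HessE (A B : 'M[R]_n) (q1 q2 eps alpha : R) (U : 'rV[R]_Mdim)
  : 'M[R]_Mdim :=
  Lmx A B q1 q2 +
  diag_mx (\row_s (- eps - 2 * alpha * U 0 s + 3 * U 0 s ^+ 2)).

Definition ip (f g : 'rV[R]_Mdim) : R := (Mdim%:R)^-1 * \sum_s f 0 s * g 0 s.

End LP.

Section LinAlg.
Variables (R : realType) (M : nat).

Definition no_neg_eig (H : 'M[R]_M) : Prop :=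
  forall a : R, eigenvalue H a -> 0 <= a.

Definition Wk (H : 'M[R]_M) : 'M[R]_M := eigenspace H 0.

Definition in_Ws (H : 'M[R]_M) (w : 'rV[R]_M) : Prop :=
  exists (k : nat) (a : 'I_k -> R) (e : 'I_k -> 'rV[R]_M),
    (forall i, 0 < a i /\ e i *m H = a i *: e i) /\ w = \sum_i e i.

Definition dotr (x y : 'rV[R]_M) : R := \sum_s x 0 s * y 0 s.
Definition norm2 (x : 'rV[R]_M) : R := Num.sqrt (dotr x x).
Definition cosr (x y : 'rV[R]_M) : R := dotr x y / (norm2 x * norm2 y).

Definition is_proj_Ws (H : 'M[R]_M) (v p : 'rV[R]_M) : Prop :=
  in_Ws H p /\ forall w, in_Ws H w -> dotr (v - p) w = 0.

(* (u i, v i, c i)_{i < dim W} realize the recursive definition of the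
   principal angles between W and Wh: c i = cos theta_{i+1}. *)
Definition principal_data (W Wh : 'M[R]_M)
  (u v : nat -> 'rV[R]_M) (c : nat -> R) : Prop :=
  forall i, (i < \rank W)%N ->
    [/\ (u i <= W)%MS /\ (v i <= Wh)%MS, u i != 0 /\ v i != 0,
        (forall j, (j < i)%N -> dotr (u i) (u j) = 0 /\ dotr (v i) (v j) = 0),
        c i = cosr (u i) (v i) &
        (forall x y, (x <= W)%MS -> (y <= Wh)%MS -> x != 0 -> y != 0 ->
           (forall j, (j < i)%N -> dotr x (u j) = 0 /\ dotr y (v j) = 0) ->
           cosr x y <= c i)].

(* || sin Theta(W, Wh) ||_2 = sin theta_d, d = dim W (0 if d = 0) *)
Definition sinTheta_norm (W : 'M[R]_M) (c : nat -> R) : R :=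
  if \rank W == 0%N then 0 else sin (acos (c (\rank W).-1)).

End LinAlg.

From HB Require Import structures.
From mathcomp Require Import all_boot all_order all_algebra.
From mathcomp Require Import all_classical all_reals all_analysis.
From mathcomp Require Import complex ring lra.
Set Implicit Arguments. Unset Strict Implicit.
Import Order.TTheory GRing.Theory Num.Theory.
Local Open Scope ring_scope.

(* The Hessian H(U) is real symmetric with no negative eigenvalue, so every v
   splits as p + k with p in W^s(U) and k in ker H(U) = W^k(U), orthogonally;
   p is the projection of v onto W^s(U).  If p = 0, the unit vector v lies in
   W^k(U) and is orthogonal to W^k(Ubar).  But when the largest principal angle
   is below pi/2, all principal cosines are positive, and perturbing a
   maximising pair (u_i, v_i) along a later principal vector shows that
   <u_i, v_j> = 0 for i <> j while <u_i, v_i> > 0.  Hence the u_i form a basis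
   of W^k(U) on which x |-> (<x, v_i>)_i is injective, forcing v = 0. *)

Section Dotr.
Context {R : realType} {M : nat}.
Implicit Types (x y z : 'rV[R]_M) (H : 'M[R]_M).

Lemma dotrC x y : dotr x y = dotr y x.
Proof. by apply: eq_bigr => i _; rewrite mulrC. Qed.

Lemma dotrDl x y z : dotr (x + y) z = dotr x z + dotr y z.
Proof. by rewrite /dotr -big_split; apply: eq_bigr => i _; rewrite mxE mulrDl. Qed.

Lemma dotrZl a x y : dotr (a *: x) y = a * dotr x y.
Proof. by rewrite /dotr mulr_sumr; apply: eq_bigr => i _; rewrite mxE mulrA. Qed.

Lemma dotrNl x y : dotr (- x) y = - dotr x y.
Proof. by rewrite -scaleN1r dotrZl mulN1r. Qed.

Lemma dotrDr x y z : dotr x (y + z) = dotr x y + dotr x z.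
Proof. by rewrite dotrC dotrDl !(dotrC x). Qed.

Lemma dotrZr a x y : dotr x (a *: y) = a * dotr x y.
Proof. by rewrite dotrC dotrZl dotrC. Qed.

Lemma dotrNr x y : dotr x (- y) = - dotr x y.
Proof. by rewrite dotrC dotrNl dotrC. Qed.

Lemma dotr0l y : dotr 0 y = 0.
Proof. by rewrite -(scale0r 0) dotrZl mul0r. Qed.

Lemma dotr0r x : dotr x 0 = 0.
Proof. by rewrite dotrC dotr0l. Qed.

Lemma dotr_suml I (r : seq I) (P : pred I) (f : I -> 'rV[R]_M) y :
  dotr (\sum_(i <- r | P i) f i) y = \sum_(i <- r | P i) dotr (f i) y.
Proof. by elim/big_rec2: _ => [|i a b _ <-]; rewrite ?dotr0l ?dotrDl. Qed.

Lemma dotr_mulmxr x y H : dotr x (y *m H) = dotr (x *m H^T) y.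
Proof.
have dotrE x' y' : dotr x' y' = (x' *m y'^T) 0 0.
  by rewrite mxE; apply: eq_bigr => i _; rewrite mxE.
by rewrite !dotrE trmx_mul mulmxA.
Qed.

Lemma dotr_ge0 x : 0 <= dotr x x.
Proof. by apply: sumr_ge0 => i _; rewrite -expr2 sqr_ge0. Qed.

Lemma dotr_eq0 x : (dotr x x == 0) = (x == 0).
Proof.
apply/idP/idP => [|/eqP->]; last by rewrite dotr0l.
rewrite psumr_eq0 => [/allP x0|i _]; last by rewrite -expr2 sqr_ge0.
apply/eqP/rowP => i; have /implyP/(_ isT) := x0 i (mem_index_enum i).
by rewrite mulf_eq0 orbb mxE => /eqP.
Qed.

Lemma dotr_gt0 x : x != 0 -> 0 < dotr x x.
Proof. by move=> xn0; rewrite lt0r dotr_eq0 xn0 dotr_ge0. Qed.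

Lemma norm2_gt0 x : x != 0 -> 0 < norm2 x.
Proof. by move=> xn0; rewrite /norm2 sqrtr_gt0 dotr_gt0. Qed.

Lemma norm2N x : norm2 (- x) = norm2 x.
Proof. by rewrite /norm2 dotrNl dotrNr opprK. Qed.

Lemma cosrC x y : cosr x y = cosr y x.
Proof. by rewrite /cosr dotrC [norm2 x * _]mulrC. Qed.

Lemma cosrNr x y : cosr x (- y) = - cosr x y.
Proof. by rewrite /cosr dotrNr norm2N mulNr. Qed.

Lemma cosr_gt0 x y : x != 0 -> y != 0 -> (0 < cosr x y) = (0 < dotr x y).
Proof. by move=> xn0 yn0; rewrite pmulr_lgt0 // invr_gt0 mulr_gt0 ?norm2_gt0. Qed.

Lemma orth_addZ_neq0 y z t : y != 0 -> dotr y z = 0 -> y + t *: z != 0.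
Proof.
move=> yn0 yz; apply: contraNneq yn0 => /(congr1 (dotr y)).
by rewrite dotrDr dotrZr yz mulr0 addr0 dotr0r => /eqP; rewrite dotr_eq0.
Qed.

Lemma dotr_mulmx_rows k (a : 'rV[R]_k) (U : 'M[R]_(k, M)) y j :
  (forall i, i != j -> dotr (row i U) y = 0) ->
  dotr (a *m U) y = a 0 j * dotr (row j U) y.
Proof.
move=> Uy; rewrite mulmx_sum_row dotr_suml (bigD1 j) //= big1 ?addr0 ?dotrZl //.
by move=> i ij; rewrite dotrZl Uy ?mulr0.
Qed.

End Dotr.

(* [b = <x,y>], [e = <x,z>], [q = |y|], [Q = |y + t z|], [r = |z|^2] for [z]
   orthogonal to [y]; the last hypothesis is [cos(x, y + t z) <= cos(x, y)] at
   the tangent step [t = e q^2 / (b r)]. *)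
Lemma cos_tangent_step_eq0 (R : realFieldType) (b e q Q r t : R) :
  0 < b -> 0 < q -> 0 < r -> 0 <= Q -> Q ^+ 2 = q ^+ 2 + t ^+ 2 * r ->
  t * b * r = e * q ^+ 2 -> (b + t * e) * q <= b * Q -> e = 0.
Proof.
move=> b_gt0 q_gt0 r_gt0 Q_ge0 Q2 tbr le_step.
set s := q ^+ 2 in Q2 tbr; have s_gt0 : 0 < s by rewrite exprn_gt0.
have te_ge0 : 0 <= t * e.
  have : 0 <= t * e * (b * r).
    have -> : t * e * (b * r) = (t * b * r) * e by ring.
    by rewrite tbr mulrAC -expr2 mulr_ge0 ?sqr_ge0 ?ltW.
  by rewrite pmulr_lge0 ?mulr_gt0.
have le_sq : (b + t * e) ^+ 2 * s <= b ^+ 2 * (s + t ^+ 2 * r).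
  have b_ge0 := ltW b_gt0; have q_ge0 := ltW q_gt0.
  by rewrite -Q2 /s -!exprMn ler_sqr // !nnegrE !mulr_ge0 ?addr_ge0.
have sum_le0 : b * s * (t * e) + s * (t * e) ^+ 2 <= 0.
  have -> : b * s * (t * e) + s * (t * e) ^+ 2 =
      (b + t * e) ^+ 2 * s - b ^+ 2 * (s + t ^+ 2 * r)
      - b * t * (e * s - t * b * r) by ring.
  by rewrite tbr subrr mulr0 subr0 subr_le0.
have : b * s * (t * e) <= 0.
  by apply: le_trans sum_le0; rewrite lerDl mulr_ge0 ?sqr_ge0 ?ltW.
rewrite pmulr_rle0 ?mulr_gt0 // => te_le0.
have te0 : t * e = 0 by apply/eqP; rewrite eq_le te_le0 te_ge0.
have : e ^+ 2 * s = 0.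
  have -> : e ^+ 2 * s = t * e * (b * r) by rewrite expr2 -mulrA -tbr; ring.
  by rewrite te0 mul0r.
by move/eqP; rewrite mulf_eq0 sqrf_eq0 (gt_eqF s_gt0) orbF => /eqP.
Qed.

Lemma cosr_maximal_orth {R : realType} {M : nat} (x y z : 'rV[R]_M) :
  x != 0 -> y != 0 -> dotr y z = 0 -> 0 < dotr x y ->
  (forall t, cosr x (y + t *: z) <= cosr x y) -> dotr x z = 0.
Proof.
move=> xn0 yn0 yz b_gt0 y_max.
have [->|zn0] := eqVneq z 0; first exact: dotr0r.
have yz_norm t : dotr (y + t *: z) (y + t *: z) = dotr y y + t ^+ 2 * dotr z z.
  by rewrite !dotrDl !dotrDr !dotrZl !dotrZr (dotrC z y) yz; ring.
have ny2 : norm2 y ^+ 2 = dotr y y by rewrite sqr_sqrtr ?dotr_ge0.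
have ny_gt0 := norm2_gt0 yn0; have r_gt0 := dotr_gt0 zn0.
set b := dotr x y in b_gt0 *; set e := dotr x z; set r := dotr z z in r_gt0 *.
pose t := e * norm2 y ^+ 2 / (b * r).
have tbr : t * b * r = e * norm2 y ^+ 2 by rewrite /t; field; rewrite !gt_eqF.
have := y_max t; rewrite /cosr dotrDr dotrZr -/b -/e.
rewrite ler_pdivlMr ?mulr_gt0 ?norm2_gt0 // mulrAC.
rewrite ler_pdivrMr ?mulr_gt0 ?norm2_gt0 ?orth_addZ_neq0 //.
rewrite mulrCA [b * _]mulrCA ler_pM2l ?norm2_gt0 // => le_step.
apply: (cos_tangent_step_eq0 b_gt0 ny_gt0 r_gt0 _ _ tbr le_step).
  exact: sqrtr_ge0.
by rewrite sqr_sqrtr ?dotr_ge0 // yz_norm ny2.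
Qed.

(* Over [complex R] the matrix is Hermitian, hence unitarily similar to a real
   diagonal matrix, so its minimal polynomial has simple real roots. *)
Lemma realsym_diagonalizable (R : rcfType) m (H : 'M[R]_m) :
  H^T = H -> diagonalizable H.
Proof.
case: m H => [|m] H H_sym.
  have -> : H = 0 by apply/matrixP => -[].
  exact: diagonalizable0.
pose toC := real_complex R; pose Hc := map_mx toC H.
have Hc_herm : Hc \is hermsymmx.
  apply: realsym_hermsym.
    rewrite qualifE expr0 scale1r map_mx_id //.
    by apply/eqP/matrixP => i j; rewrite !mxE -[in RHS]H_sym mxE.
  by rewrite qualifE; apply/'forall_forallP => i j; rewrite mxE complex_real.
have /orthomx_spectralP Hc_diag := hermitian_normalmx Hc_herm.
have d_real := hermitian_spectral_diag_real Hc_herm.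
set d := spectral_diag Hc in Hc_diag d_real.
pose rs := undup [seq complex.Re (d 0 i) | i : 'I_m.+1].
apply/diagonalizableP; exists rs; first exact: undup_uniq.
apply: mxminpoly_min; apply: (@map_mx_inj _ _ toC).
rewrite map_horner_mx map_mx0 -/Hc Hc_diag horner_mx_uconjC ?spectral_unit //.
rewrite horner_mx_diag.
suff -> : map_mx (horner (map_poly toC (\prod_(x <- rs) ('X - x%:P)))) d = 0.
  by rewrite raddf0 mulmx0 mul0mx.
apply/rowP => j; rewrite !mxE rmorph_prod horner_prod.
have dj_real : d 0 j = toC (complex.Re (d 0 j)).
  by rewrite /toC RRe_real //; apply: (mxOverP d_real).
have : complex.Re (d 0 j) \in rs.
  by rewrite mem_undup; apply/mapP; exists j; rewrite ?mem_enum.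
move=> /perm_to_rem /(perm_big _) ->; rewrite big_cons /=.
by rewrite map_polyXsubC hornerXsubC dj_real subrr mul0r.
Qed.

Section NonnegativeSpectrum.
Context {R : realType} {M : nat} (H : 'M[R]_M).
Hypotheses (H_sym : H^T = H) (H_psd : no_neg_eig H).

Lemma eigenspace_nonpos_mul0 (r : R) (w : 'rV[R]_M) :
  r <= 0 -> (w <= eigenspace H r)%MS -> w *m H = 0.
Proof.
rewrite le_eqVlt => /orP[/eqP-> /eigenspaceP->|r_lt0 wr]; first by rewrite scale0r.
have Hr0 : eigenspace H r = 0.
  by apply/eqP; apply: contraTT r_lt0 => /H_psd; rewrite leNgt.
by move: wr; rewrite Hr0 submx0 => /eqP->; rewrite mul0mx.
Qed.

Lemma Ws_ker_decomposition (v : 'rV[R]_M) :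
  exists2 p, in_Ws H p & (v - p) *m H = 0.
Proof.
have /diagonalizablePeigen[rs _ rs_full] := realsym_diagonalizable H_sym.
have : (v <= \sum_(i < size rs) eigenspace H rs`_i)%MS.
  rewrite -(big_mkord xpredT (fun i => eigenspace H rs`_i)).
  by rewrite -(big_nth 0 xpredT (eigenspace H)) rs_full submx1.
case/sub_sumsmxP => a vE; pose w i := a i *m eigenspace H rs`_i.
have w_eig i : (w i <= eigenspace H rs`_i)%MS by apply: submxMl.
pose pos (i : 'I_(size rs)) := 0 < rs`_i.
exists (\sum_i if pos i then w i else 0).
  exists (size rs), (fun i => if pos i then rs`_i else 1).
  exists (fun i => if pos i then w i else 0); split=> // i.
  case: ifP => [pos_i|_]; last by rewrite ltr01 mul0mx scaler0.
  by split=> //; apply/eigenspaceP.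
rewrite vE -sumrB mulmx_suml big1 // => i _.
case: ifPn => [_|]; first by rewrite subrr mul0mx.
by rewrite subr0 /pos -leNgt => r_le0; apply: eigenspace_nonpos_mul0 r_le0 (w_eig i).
Qed.

Lemma dotr_ker_Ws (k w : 'rV[R]_M) : k *m H = 0 -> in_Ws H w -> dotr k w = 0.
Proof.
move=> kH [m [a [e [e_eig ->]]]]; rewrite dotrC dotr_suml big1 // => i _.
have [a_gt0 eH] := e_eig i.
have : a i * dotr (e i) k = 0.
  by rewrite -dotrZl -eH dotrC dotr_mulmxr H_sym kH dotr0l.
by move/eqP; rewrite mulf_eq0 (gt_eqF a_gt0) => /eqP.
Qed.

Lemma is_proj_Ws_ker (v p : 'rV[R]_M) :
  in_Ws H p -> (v - p) *m H = 0 -> is_proj_Ws H v p.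
Proof. by move=> p_Ws vpH; split=> // w; apply: dotr_ker_Ws. Qed.

End NonnegativeSpectrum.

Section PrincipalAngles.
Context {R : realType} {M : nat} (W Wh : 'M[R]_M).
Context (u v : nat -> 'rV[R]_M) (c : nat -> R).
Hypothesis PD : principal_data W Wh u v c.
Local Notation d := (\rank W).

Lemma principal_mem i : (i < d)%N -> (u i <= W)%MS /\ (v i <= Wh)%MS.
Proof. by case/PD. Qed.

Lemma principal_neq0 i : (i < d)%N -> u i != 0 /\ v i != 0.
Proof. by case/PD. Qed.

Lemma principal_orth i j :
  (i < d)%N -> (j < i)%N -> dotr (u i) (u j) = 0 /\ dotr (v i) (v j) = 0.
Proof. by case/PD=> _ _ + _ _; apply. Qed.

Lemma principal_cosE i : (i < d)%N -> c i = cosr (u i) (v i).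
Proof. by case/PD. Qed.

Lemma principal_cos_max i x y : (i < d)%N ->
  (x <= W)%MS -> (y <= Wh)%MS -> x != 0 -> y != 0 ->
  (forall j, (j < i)%N -> dotr x (u j) = 0 /\ dotr y (v j) = 0) ->
  cosr x y <= c i.
Proof. by case/PD=> _ _ _ _; apply. Qed.

Lemma principal_cos_ge0 i : (i < d)%N -> 0 <= c i.
Proof.
move=> id; have [uW vWh] := principal_mem id; have [un0 vn0] := principal_neq0 id.
have : cosr (u i) (- v i) <= c i.
  apply: principal_cos_max; rewrite ?eqmx_opp ?oppr_eq0 // => j ji.
  by have [-> vij] := principal_orth id ji; rewrite dotrNl vij oppr0.
rewrite cosrNr -principal_cosE //; lra.
Qed.

Lemma principal_cos_antitone i k : (i <= k)%N -> (k < d)%N -> c k <= c i.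
Proof.
move=> ik kd; have id := leq_ltn_trans ik kd.
have [uW vWh] := principal_mem kd; have [un0 vn0] := principal_neq0 kd.
rewrite principal_cosE //; apply: principal_cos_max => // j ji.
exact: principal_orth (leq_trans ji ik).
Qed.

Lemma principal_cross_orth i j : (i < j)%N -> (j < d)%N -> 0 < c i ->
  dotr (u i) (v j) = 0 /\ dotr (u j) (v i) = 0.
Proof.
move=> ij jd ci_gt0; have id := ltn_trans ij jd.
have [uiW viWh] := principal_mem id; have [ujW vjWh] := principal_mem jd.
have [uin0 vin0] := principal_neq0 id.
have [ujui vjvi] := principal_orth jd ij.
have b_gt0 : 0 < dotr (u i) (v i) by rewrite -cosr_gt0 // -principal_cosE.
have before_i k : (k < i)%N ->
    dotr (u i) (u k) = 0 /\ dotr (v i) (v k) = 0 /\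
    dotr (u j) (u k) = 0 /\ dotr (v j) (v k) = 0.
  move=> ki; have kj := ltn_trans ki ij.
  by have [? ?] := principal_orth id ki; have [? ?] := principal_orth jd kj.
split.
  apply: (cosr_maximal_orth uin0 vin0 _ b_gt0) => [|t]; first by rewrite dotrC.
  rewrite -principal_cosE //; apply: principal_cos_max => //.
  - by rewrite addmx_sub ?scalemx_sub.
  - by apply: orth_addZ_neq0; rewrite // dotrC.
  move=> k /before_i [-> [vik [_ vjk]]].
  by rewrite dotrDl dotrZl vik vjk mulr0 addr0.
rewrite dotrC; apply: (cosr_maximal_orth vin0 uin0) => [||t].
- by rewrite dotrC.
- by rewrite dotrC.
rewrite cosrC [cosr (v i) _]cosrC -principal_cosE //.
apply: principal_cos_max => //.
- by rewrite addmx_sub ?scalemx_sub.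
- by apply: orth_addZ_neq0; rewrite // dotrC.
move=> k /before_i [uik [-> [ujk _]]].
by rewrite dotrDl dotrZl uik ujk mulr0 addr0.
Qed.

Lemma principal_cos_gt0_orth_eq0 x : (forall i, (i < d)%N -> 0 < c i) ->
  (x <= W)%MS -> (forall w, (w <= Wh)%MS -> dotr x w = 0) -> x = 0.
Proof.
move=> c_gt0 xW x_orth.
have b_gt0 i : (i < d)%N -> 0 < dotr (u i) (v i).
  move=> id; have [un0 vn0] := principal_neq0 id.
  by rewrite -cosr_gt0 // -principal_cosE ?c_gt0.
have cross i j : (i < d)%N -> (j < d)%N -> i != j -> dotr (u i) (v j) = 0.
  move=> id jd; case: ltngtP => // [ij|ji] _.
    exact: (principal_cross_orth ij jd (c_gt0 _ id)).1.
  exact: (principal_cross_orth ji id (c_gt0 _ jd)).2.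
pose U := \matrix_(i < d) u i.
have coef_eq0 a : (forall j : 'I_d, dotr (a *m U) (v j) = 0) -> a = 0.
  move=> aU_orth; apply/rowP => j; move: (aU_orth j).
  rewrite (dotr_mulmx_rows _ (j := j)) => [|i ij]; last by rewrite rowK cross.
  move/eqP; rewrite rowK mulf_eq0 (gt_eqF (b_gt0 _ (ltn_ord j))) orbF mxE.
  by move/eqP.
have U_free : row_free U.
  by apply/inj_row_free => a aU0; apply: coef_eq0 => j; rewrite aU0 dotr0l.
have UW : (U <= W)%MS.
  by apply/row_subP => i; rewrite rowK (principal_mem (ltn_ord i)).1.
have /andP[_ WU] : (U == W)%MS.
  by rewrite -(geq_leqif (mxrank_leqif_eq UW)) (eqP U_free).
have [a xE] := submxP (submx_trans xW WU).
rewrite xE (coef_eq0 a) ?mul0mx // => j.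
by rewrite -xE x_orth ?(principal_mem (ltn_ord j)).2.
Qed.

Lemma sinTheta_norm_lt1_cos_gt0 :
  sinTheta_norm W c < 1 -> forall i, (i < d)%N -> 0 < c i.
Proof.
rewrite /sinTheta_norm.
case: eqP => [d0 _ i|/eqP dn0 sin_lt1 i id]; first by rewrite d0.
have last_lt_d : (d.-1 < d)%N by rewrite ltn_predL lt0n.
have clast_gt0 : 0 < c d.-1.
  rewrite lt_neqAle principal_cos_ge0 // andbT.
  by apply: contraTneq sin_lt1 => <-; rewrite acos0 sin_pihalf ltxx.
have i_le : (i <= d.-1)%N by rewrite -ltnS prednK // lt0n.
exact: lt_le_trans clast_gt0 (principal_cos_antitone i_le last_lt_d).
Qed.

End PrincipalAngles.

Lemma HessE_sym (R : realType) (n N : nat) (A B : 'M[R]_n)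
    (q1 q2 eps alpha : R) (U : 'rV[R]_(Mdim n N)) :
  (HessE A B q1 q2 eps alpha U)^T = HessE A B q1 q2 eps alpha U.
Proof.
rewrite /HessE linearD /= tr_diag_mx; congr (_ + _).
apply/matrixP => s t; rewrite !mxE; congr (_ * _); apply: eq_bigr => m _.
congr (_ * _); rewrite -cosN; congr cos.
by rewrite /dotc -sumrN; apply: eq_bigr => i _; rewrite !mxE -mulrN opprB.
Qed.

Lemma ip_eq0 (R : realType) (n N : nat) (f g : 'rV[R]_(Mdim n N)) :
  (0 < N)%N -> (ip f g == 0) = (dotr f g == 0).
Proof.
move=> N_gt0; have M_gt0 : 0 < (Mdim n N)%:R :> R by rewrite ltr0n expn_gt0 N_gt0.
by rewrite /ip mulf_eq0 invr_eq0 (gt_eqF M_gt0).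
Qed.

(* Besides [0 < N], only the spectrum condition at [U], the angle bound and the
   constraints on [v] are used. *)
Theorem lemma4p1 (R : realType) (n N : nat) (A B : 'M[R]_n)
  (q1 q2 eps alpha : R) (Ustar U Ubar : 'rV[R]_(Mdim n N)) :
  (0 < n)%N -> (0 < N)%N ->
  A \in unitmx -> A *m B^T = (2 * pi) %:M ->
  (* U^* is a generalized local minimum *)
  gradE A B q1 q2 eps alpha Ustar = 0 ->
  no_neg_eig (HessE A B q1 q2 eps alpha Ustar) ->
  (* U and Ubar lie in its generalized quadratic region *)
  no_neg_eig (HessE A B q1 q2 eps alpha U) ->
  no_neg_eig (HessE A B q1 q2 eps alpha Ubar) ->
  (\rank (Wk (HessE A B q1 q2 eps alpha U))
     <= \rank (Wk (HessE A B q1 q2 eps alpha Ubar)))%N ->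
  (exists u v c,
     principal_data (Wk (HessE A B q1 q2 eps alpha U))
                    (Wk (HessE A B q1 q2 eps alpha Ubar)) u v c /\
     sinTheta_norm (Wk (HessE A B q1 q2 eps alpha U)) c < 1) ->
  forall v : 'rV[R]_(Mdim n N),
    (* v solves the constrained minimization problem *)
    (ip v v = 1 /\
     (forall w, (w <= Wk (HessE A B q1 q2 eps alpha Ubar))%MS -> ip v w = 0) /\
     (forall x, ip x x = 1 ->
        (forall w, (w <= Wk (HessE A B q1 q2 eps alpha Ubar))%MS -> ip x w = 0) ->
        ip v (v *m HessE A B q1 q2 eps alpha U)
          <= ip x (x *m HessE A B q1 q2 eps alpha U))) ->
    (* its orthogonal projection onto W^s(U) is nonzero *)
    exists p, is_proj_Ws (HessE A B q1 q2 eps alpha U) v p /\ p != 0.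
Proof.
move=> _ N_gt0 _ _ _ _ H_psd _ _ [u [w [c [PD sin_lt1]]]] v [v_unit [v_perp _]].
have H_sym := HessE_sym A B q1 q2 eps alpha U.
set H := HessE A B q1 q2 eps alpha U in H_sym H_psd PD sin_lt1 *.
have [p p_Ws p_ker] := Ws_ker_decomposition H_sym H_psd v.
exists p; split; first exact: is_proj_Ws_ker.
have v_neq0 : v != 0 by rewrite -dotr_eq0 -ip_eq0 // v_unit oner_neq0.
apply: contraNneq v_neq0 => p0; move: p_ker; rewrite p0 subr0 => v_ker.
apply/eqP; apply: (principal_cos_gt0_orth_eq0 PD).
- exact: sinTheta_norm_lt1_cos_gt0 PD sin_lt1.
- by apply/eigenspaceP; rewrite v_ker scale0r.
by move=> x /v_perp /eqP; rewrite ip_eq0 // => /eqP.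
Qed.
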